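(* Let $n\ge2$, $c\in(0,\infty)$, and let $\Sigma_n\in\mathbb{R}^{n\times n}$ have entries $(\Sigma_n)_{ij}=\frac{\pi}{i+j}+\frac{4c\pi^2}{(i+1)(j+1)}$ if $c\in(0,1]$ and $(\Sigma_n)_{ij}=\frac{\pi}{c(i+j)}+\frac{4\pi^2}{(i+1)(j+1)}$ if $c\in(1,\infty)$. Then for $c\in(0,1]$ $$\det(\Sigma_n)=\frac{\pi(1+2c\pi)}{2}\prod_{i=2}^n\frac{\pi\prod_{k=1}^{i-1}(i-k)^2}{2i\prod_{k=1}^{i-1}(i+k)^2},$$ and for $c\in(1,\infty)$ $$\det(\Sigma_n)=\frac{\pi(1+2c\pi)}{2c^n}\prod_{i=2}^n\frac{\pi\prod_{k=1}^{i-1}(i-k)^2}{2i\prod_{k=1}^{i-1}(i+k)^2}.$$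
   Context: $\Sigma_n$ is the asymptotic covariance matrix, in the critical regime $t\delta_t^d\to c$, of the vector $(\tilde L_t^{(0)},\dots,\tilde L_t^{(n-1)})$ of normalized length power functionals in dimension $d=2$ for a window of volume $1$. *)

From HB Require Import structures.
From mathcomp Require Import all_boot all_order all_algebra.
From mathcomp Require Import reals trigo.
Set Implicit Arguments. Unset Strict Implicit. Unset Printing Implicit Defensive.
Import Order.TTheory GRing.Theory Num.Theory.
Local Open Scope ring_scope.

(* Sigma_n, with the paper's indices i, j in {1,...,n}; the ordinal
   i : 'I_n represents the paper's index i.+1. *)
Definition Sigma (R : realType) (n : nat) (c : R) : 'M[R]_n :=
  \matrix_(i < n, j < n)
    if c <= 1 then
      pi / (i.+1 + j.+1)%:R + 4 * c * pi ^+ 2 / ((i.+2)%:R * (j.+2)%:R)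
    else
      pi / (c * (i.+1 + j.+1)%:R) + 4 * pi ^+ 2 / ((i.+2)%:R * (j.+2)%:R).

Definition det_factor (R : realType) (n : nat) : R :=
  \prod_(2 <= i < n.+1)
    ((pi * \prod_(1 <= k < i) ((i - k)%:R) ^+ 2) /
     (2 * i%:R * \prod_(1 <= k < i) ((i + k)%:R) ^+ 2)).

(* Write H for the n x n matrix (1/(i+j)), the Cauchy matrix of x_i = y_i = i.
   Since H e_1 = (1/(i+1))_i, in both regimes Sigma_n = a H + b (H e_1)(H e_1)^T
   = (a I + b (H e_1) e_1^T) H, and the left factor is triangular, so
   det Sigma_n = (a + b/2) a^(n-1) det H.  For det H we use Cauchy's recursion:
   subtracting suitable multiples of the last column of a Cauchy matrix from
   the other columns clears its last row except for the corner entry, and turns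
   the remaining block into diag(p) C diag(q), with C the next smaller Cauchy
   matrix; for H these are the factors of the product in the statement. *)

From mathcomp Require Import all_boot all_order all_algebra.
From mathcomp Require Import reals trigo.
From mathcomp Require Import ring.
Set Implicit Arguments. Unset Strict Implicit. Unset Printing Implicit Defensive.
Import Order.TTheory GRing.Theory Num.Theory.
Local Open Scope ring_scope.

Section RankOneDeterminants.
Variable R : comPzRingType.

Lemma det_scalar_add_col0 n (a : R) (v : 'cV[R]_n.+1) :
  \det (a%:M + v *m delta_mx 0 0) = (a + v 0 0) * a ^+ n.
Proof.
have E i j :
    (a%:M + v *m delta_mx 0 0) i j = a *+ (i == j) + v i 0 * (j == 0)%:R.
  by rewrite !mxE big_ord1 !mxE eqxx.
rewrite det_trig; last first.
  apply/is_trig_mxP => i j lt_ij.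
  have j_gt0 : (0 < j)%N by apply: leq_ltn_trans lt_ij.
  by rewrite E -!val_eqE ltn_eqF // gtn_eqF // mulr0 add0r.
rewrite big_ord_recl E eqxx mulr1 (eq_bigr (fun=> a)) => [|i _].
  by rewrite prodr_const card_ord.
by rewrite E eqxx mulr0 addr0.
Qed.

Lemma det_scalar_add_row_last n (a : R) (u : 'rV[R]_n.+1) :
  \det (a%:M + delta_mx ord_max 0 *m u) = (a + u 0 ord_max) * a ^+ n.
Proof.
have E i j : (a%:M + delta_mx ord_max 0 *m u) i j
             = a *+ (i == j) + (i == ord_max)%:R * u 0 j.
  by rewrite !mxE big_ord1 !mxE eqxx andbT.
rewrite det_trig; last first.
  apply/is_trig_mxP => i j lt_ij.
  have iN : (i < @ord_max n)%N by apply: leq_trans lt_ij _; rewrite -ltnS.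
  by rewrite E -!val_eqE !ltn_eqF // mul0r addr0.
rewrite big_ord_recr /= E !eqxx !mulr1n mulrC (eq_bigr (fun=> a)) => [|i _].
  by rewrite mul1r prodr_const card_ord.
by rewrite E eqxx -val_eqE /= ltn_eqF // mul0r addr0.
Qed.

Lemma expand_det_last_row n (A : 'M[R]_n.+1) :
  (forall j, j != ord_max -> A ord_max j = 0) ->
  \det A = A ord_max ord_max * \det (row' ord_max (col' ord_max A)).
Proof.
move=> A_last.
rewrite (expand_det_row _ ord_max) (bigD1 ord_max) //= big1 ?addr0.
  by rewrite /cofactor -signr_odd /= addnn odd_double expr0 mul1r.
by move=> j /A_last ->; rewrite mul0r.
Qed.

Lemma det_add_outer_col0_row0 n (a b : R) (A : 'M[R]_n.+1) :
  \det (\matrix_(i, j) (a * A i j + b * (A i 0 * A 0 j)))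
  = (a + b * A 0 0) * a ^+ n * \det A.
Proof.
have -> : \matrix_(i, j) (a * A i j + b * (A i 0 * A 0 j))
          = (a%:M + (b *: col 0 A) *m delta_mx 0 0) *m A.
  apply/matrixP => i j; rewrite mulmxDl mul_scalar_mx -mulmxA -rowE !mxE.
  by rewrite big_ord1 !mxE mulrA.
by rewrite det_mulmx det_scalar_add_col0 !mxE mulrC.
Qed.

End RankOneDeterminants.

Section CauchyMatrix.
Variables (R : fieldType) (x y : nat -> R).

Definition cauchy_mx n : 'M[R]_n := \matrix_(i < n, j < n) (x i + y j)^-1.

Hypothesis xy_neq0 : forall i j, x i + y j != 0.

Lemma cauchy_col_elim i j k :
  (x i + y j)^-1 - (x i + y k)^-1 * ((x k + y k) / (x k + y j))
  = (x k - x i) / (x i + y k) * (x i + y j)^-1 * ((y k - y j) / (x k + y j)).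
Proof. by field; rewrite !xy_neq0. Qed.

Lemma det_cauchy_mx_recr n :
  \det (cauchy_mx n.+1) = \det (cauchy_mx n) * (x n + y n)^-1
    * \prod_(i < n) ((x n - x i) / (x i + y n))
    * \prod_(i < n) ((y n - y i) / (x n + y i)).
Proof.
pose u : 'rV[R]_n.+1 :=
  \row_j (if j == ord_max then 0 else - ((x n + y n) / (x n + y j))).
pose M := cauchy_mx n.+1 *m (1%:M + delta_mx ord_max 0 *m u).
have ME i j : M i j = (x i + y j)^-1 + (x i + y n)^-1 * u 0 j.
  by rewrite /M mulmxDr mulmx1 mulmxA -colE !mxE big_ord1 !mxE.
have detM : \det M = \det (cauchy_mx n.+1).
  by rewrite det_mulmx det_scalar_add_row_last mxE eqxx addr0 expr1n !mulr1.
clearbody M.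
have M_last j : j != ord_max -> M ord_max j = 0.
  by move=> /negbTE jN; rewrite ME mxE jN mulrN cauchy_col_elim subrr !mul0r.
pose p : 'rV[R]_n := \row_i ((x n - x i) / (x i + y n)).
pose q : 'rV[R]_n := \row_j ((y n - y j) / (x n + y j)).
have M_minor :
    row' ord_max (col' ord_max M) = diag_mx p *m cauchy_mx n *m diag_mx q.
  apply/matrixP => i j; rewrite mul_mx_diag mul_diag_mx !mxE ME mxE.
  by rewrite eq_sym (negbTE (neq_lift _ _)) !lift_max mulrN cauchy_col_elim.
rewrite -detM (expand_det_last_row M_last) M_minor !det_mulmx !det_diag.
rewrite ME mxE eqxx mulr0 addr0.
under eq_bigr do rewrite mxE.
under [\prod_i q 0 i]eq_bigr do rewrite mxE.
ring.
Qed.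
End CauchyMatrix.

(* The paper's (1/(i+j))_{1<=i,j<=n}: the Hilbert matrix without its first row
   and column. *)
Definition hilbert_mx (R : fieldType) n : 'M[R]_n :=
  cauchy_mx (fun i => i.+1%:R) (fun i => i.+1%:R) n.

Lemma det_hilbert_mx_recr (R : numFieldType) n :
  \det (hilbert_mx R n.+1) = \det (hilbert_mx R n) *
    (\prod_(1 <= k < n.+1) ((n.+1 - k)%:R) ^+ 2 /
     (2 * n.+1%:R * \prod_(1 <= k < n.+1) ((n.+1 + k)%:R) ^+ 2)).
Proof.
rewrite det_cauchy_mx_recr => [|i j]; last by rewrite -natrD pnatr_eq0 addnS.
have sq : \prod_(i < n) ((n.+1%:R - i.+1%:R) / (i.+1%:R + n.+1%:R))
          * \prod_(i < n) ((n.+1%:R - i.+1%:R) / (n.+1%:R + i.+1%:R))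
        = \prod_(1 <= k < n.+1) ((n.+1 - k)%:R) ^+ 2
          / \prod_(1 <= k < n.+1) ((n.+1 + k)%:R) ^+ 2 :> R.
  rewrite -prodf_div big_add1 big_mkord -big_split; apply: eq_bigr => i _ /=.
  by rewrite natrB ?ltnS 1?ltnW // natrD [_ + n.+1%:R]addrC -expr_div_n expr2.
have -> : n.+1%:R + n.+1%:R = 2 * n.+1%:R :> R by rewrite mulr_natl mulr2n.
rewrite [in RHS]invfM -!mulrA sq; congr (_ * _).
by rewrite mulrCA.
Qed.

Lemma det_factorE (R : realType) n :
  det_factor R n.+1 = 2 * pi ^+ n * \det (hilbert_mx R n.+1).
Proof.
elim: n => [|n IH].
  rewrite /det_factor big_geq // det_mx11 mxE.
  by rewrite expr0 mulr1 -natrD divff // pnatr_eq0.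
rewrite /det_factor big_nat_recr //= -/(det_factor R n.+1) IH.
rewrite [in RHS]det_hilbert_mx_recr exprS.
ring.
Qed.

Lemma det_hilbert_add_outer (R : realType) n (a b : R) :
  \det (\matrix_(i, j) (a * hilbert_mx R n.+1 i j
                        + b * (hilbert_mx R n.+1 i 0 * hilbert_mx R n.+1 0 j)))
  = (a + b / 2) * a ^+ n / (2 * pi ^+ n) * det_factor R n.+1.
Proof.
have H00 : hilbert_mx R n.+1 0 0 = 2^-1 by rewrite mxE.
have pi_pow_neq0 : pi ^+ n != 0 :> R by rewrite expf_neq0 // gt_eqF ?pi_gt0.
rewrite det_add_outer_col0_row0 det_factorE H00.
by field.
Qed.

Lemma Sigma_hilbertE (R : realType) n (c : R) :
  Sigma n.+1 c = \matrix_(i, j)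
    ((if c <= 1 then pi else pi / c) * hilbert_mx R n.+1 i j
     + (if c <= 1 then 4 * c * pi ^+ 2 else 4 * pi ^+ 2)
       * (hilbert_mx R n.+1 i 0 * hilbert_mx R n.+1 0 j)).
Proof.
apply/matrixP => i j; rewrite !mxE /= -!natrD addn1 add1n.
by case: ifP => _; rewrite ?invfM !mulrA.
Qed.

Theorem corollary7p12 (R : realType) (n : nat) (c : R) :
  (2 <= n)%N -> 0 < c ->
  (c <= 1 -> \det (Sigma n c) = pi * (1 + 2 * c * pi) / 2 * det_factor R n) /\
  (1 < c -> \det (Sigma n c) = pi * (1 + 2 * c * pi) / (2 * c ^+ n) * det_factor R n).
Proof.
case: n => [|n] // _ c_gt0.
have pin_neq0 : pi ^+ n != 0 :> R by rewrite expf_neq0 // gt_eqF ?pi_gt0.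
have cn_neq0 : c ^+ n != 0 by rewrite expf_neq0 // gt_eqF.
rewrite Sigma_hilbertE det_hilbert_add_outer; split => [c_le1|c_gt1].
  by rewrite c_le1; field.
rewrite leNgt c_gt1 /= expr_div_n [c ^+ n.+1]exprS.
by field; rewrite cn_neq0 pin_neq0 gt_eqF.
Qed.
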